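(* Let $\Gamma$ be a finite undirected simple graph with vertices $x_1,\dots,x_n$ and edge set $E$, and let $G_\Gamma$ be the associated group with commutator generators $y_1,\dots,y_N$. For $d\in\{1,\dots,n-1\}$ let $V_d=\{x_i : \deg(x_i)\ge d\}$ and \[H_d=\Big\{\prod_{x_i\in V_d}x_i^{z_i}\prod_{l=1}^N y_l^{t_l}\ :\ z_i,t_l\in\mathbb{Z}\Big\}\subseteq G_\Gamma\] (products taken in increasing order of indices). Then for every $d\in\{1,\dots,n-1\}$, $H_d$ is a characteristic subgroup of $G_\Gamma$, i.e. $\varphi(H_d)=H_d$ for every automorphism $\varphi$ of $G_\Gamma$.
   Context: For a finite undirected simple graph $\Gamma$ with vertex set $\{x_1,\dots,x_n\}$ and edge set $E$, the group $G_\Gamma$ is defined by the presentation with generators $x_1,\dots,x_n$ and $y_{i,j}$ for each pair $i<j$ with $x_ix_j\notin E$, and relations $[x_j,x_i]=1$ if $x_ix_j\in E$; $[x_j,x_i]=y_{i,j}$ if $x_ix_j\notin E$ and $i<j$; and $[x_l,y_{i,j}]=1$ for all $l$ and all such $y_{i,j}$. Let $N$ be the number of pairs $i<j$ with $x_ix_j\notin E$, and enumerate the $y_{i,j}$ as $y_1,\dots,y_N$. Every element of $G_\Gamma$ is uniquely of the form $x_1^{z_1}\cdots x_n^{z_n}y_1^{t_1}\cdots y_N^{t_N}$. *)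

From HB Require Import structures.
From mathcomp Require Import all_boot all_order all_algebra.
Set Implicit Arguments. Unset Strict Implicit. Unset Printing Implicit Defensive.
Import Order.TTheory GRing.Theory Num.Theory.
Local Open Scope ring_scope.

(* Index set of the generators y_{i,j}: pairs i < j with x_i x_j not an edge. *)
Definition nonedge (n : nat) (e : rel 'I_n) (p : 'I_n * 'I_n) : bool :=
  ((p.1 < p.2)%N) && ~~ e p.1 p.2.

Definition Yidx (n : nat) (e : rel 'I_n) := {p : 'I_n * 'I_n | nonedge e p}.

(* An element x_1^{z_1} ... x_n^{z_n} y_1^{t_1} ... y_N^{t_N} of G_Gamma,
   in its unique normal form. *)
Record GG (n : nat) (e : rel 'I_n) := mkGG {
  gz : {ffun 'I_n -> int};
  gt : {ffun Yidx e -> int}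
}.

(* With [a,b] = a^-1 b^-1 a b, the
   relation [x_j, x_i] = y_{ij} (i<j) gives x_j^a x_i^b = x_i^b x_j^a y_{ij}^{ab},
   and the y's are central.  Hence
   (x^z y^t)(x^z' y^t') = x^(z+z') y^(t + t' + c) with c_{ij} = z_j z'_i. *)
Definition GGmul (n : nat) (e : rel 'I_n) (a b : GG e) : GG e :=
  mkGG [ffun i => gz a i + gz b i]
       [ffun p : Yidx e => gt a p + gt b p + gz a (val p).2 * gz b (val p).1].

Definition deg (n : nat) (e : rel 'I_n) (i : 'I_n) : nat := #|[set j | e i j]|.

Definition inH (n : nat) (e : rel 'I_n) (d : nat) (g : GG e) : Prop :=
  forall i : 'I_n, (deg e i < d)%N -> gz g i = 0.

Definition is_aut (n : nat) (e : rel 'I_n) (phi : GG e -> GG e) : Prop :=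
  bijective phi /\ forall a b, phi (GGmul a b) = GGmul (phi a) (phi b).

From HB Require Import structures.
From mathcomp Require Import all_boot all_order all_algebra.
Set Implicit Arguments. Unset Strict Implicit. Unset Printing Implicit Defensive.
Import Order.TTheory GRing.Theory Num.Theory.
Local Open Scope ring_scope.

(* An endomorphism phi of G_Gamma kills the central generators y_p, which are
   commutators, so on x-exponent vectors it acts through an additive map L of
   Z^n, injective when phi is an automorphism.  Since x_i commutes with x_k for
   every k in the closed neighbourhood N[i], the images of e_i and e_k have
   vanishing 2x2 minors at every non-edge.  If L e_i had a nonzero coordinate j
   with deg x_j < deg x_i, the deg x_i + 1 vectors L e_k (k in N[i]) would admit
   a nontrivial integer relation on the deg x_j + 1 coordinates in N[j]; the
   minor relations with L e_i, whose j-th coordinate is nonzero, propagate it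
   to all coordinates, contradicting injectivity.  Hence L e_i is supported on
   vertices of degree at least deg x_i, and phi and phi^-1 both preserve H_d. *)

Lemma clear_denominators (I : finType) (c : I -> rat) :
  exists2 D : int, D != 0 & exists m : I -> int, forall k, (m k)%:~R = c k * D%:~R.
Proof.
exists (\prod_k denq (c k)); first by apply/prodf_neq0 => k _; apply: denq_neq0.
exists (fun k => numq (c k) * \prod_(l | l != k) denq (c l)) => k.
by rewrite [in RHS](bigD1 k) //= !intrM numqE mulrA.
Qed.

Lemma int_rows_dependent (r s : nat) (w : 'I_r -> 'I_s -> int) : (s < r)%N ->
  exists2 m : 'I_r -> int, (exists k, m k != 0) & forall c, \sum_k m k * w k c = 0.
Proof.
move=> lt_sr; pose A : 'M[rat]_(r, s) := \matrix_(k, c) (w k c)%:~R.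
have : kermx A != 0.
  rewrite kermx_eq0; apply: contraTN lt_sr => /eqP rkA.
  by rewrite -leqNgt -rkA rank_leq_col.
case/matrix0Pn => i0 [k0 nz_k0].
have [D nzD [m mE]] := clear_denominators (kermx A i0).
exists m.
  by exists k0; rewrite -(intr_eq0 rat) mE mulf_eq0 intr_eq0 negb_or nz_k0.
move=> c; apply/eqP; rewrite -(intr_eq0 rat) rmorph_sum /=.
have kerA : \sum_k kermx A i0 k * A k c = 0.
  have := congr1 (fun M : 'M[rat]_(r, s) => M i0 c) (mulmx_ker A).
  by rewrite !mxE.
under eq_bigr => k _ do rewrite intrM mE mulrAC.
rewrite -mulr_suml (_ : \sum_k _ = 0) ?mul0r //; rewrite -[RHS]kerA.
by apply: eq_bigr => k _; rewrite [A k c]mxE.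
Qed.

Section DeltaFfun.
Variable I : finType.

Definition delta_ffun (i : I) : {ffun I -> int} := [ffun k => (k == i)%:R].

Lemma delta_ffunE i k : delta_ffun i k = (k == i)%:R.
Proof. exact: ffunE. Qed.

Lemma ffun_delta_expand (z : {ffun I -> int}) : z = \sum_i delta_ffun i *~ z i.
Proof.
apply/ffunP => k; rewrite sum_ffunE (bigD1 k) //= big1 => [|i /negbTE ik].
  by rewrite ffunMzE delta_ffunE eqxx addr0 mulrzz mul1r.
by rewrite ffunMzE delta_ffunE (eq_sym k) ik mul0rz.
Qed.

End DeltaFfun.

Section Graph.
Variables (n : nat) (e : rel 'I_n).
Hypothesis e_sym : symmetric e.
Notation vec := {ffun 'I_n -> int}.
Notation G := (GG e).

Definition cnbhd (i : 'I_n) : {set 'I_n} := i |: [set k | e i k].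

Lemma card_cnbhd (e_irr : irreflexive e) i : #|cnbhd i| = (deg e i).+1.
Proof. by rewrite cardsU1 inE e_irr. Qed.

Definition xcommute (u w : vec) : Prop :=
  forall a b, ~~ e a b -> u a * w b = w a * u b.

Lemma xcommute_delta i k : k \in cnbhd i -> xcommute (delta_ffun i) (delta_ffun k).
Proof.
case/setU1P => [-> // | /[1!inE] eik] a b nab.
rewrite !delta_ffunE -!natrM !mulnb; congr (nat_of_bool _)%:R.
by apply/idP/idP => /andP[/eqP ai /eqP bi]; move: nab; rewrite ai bi ?eik // e_sym eik.
Qed.

Definition Xg (z : vec) : G := mkGG z 0.
Definition Yg (t : {ffun Yidx e -> int}) : G := mkGG 0 t.

Lemma GG_eq (a b : G) : gz a = gz b -> gt a = gt b -> a = b.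
Proof. by case: a b => [z t] [z' t'] /= -> ->. Qed.

Lemma gz_mul (a b : G) : gz (GGmul a b) = gz a + gz b.
Proof. by apply/ffunP => i; rewrite !ffunE. Qed.

Lemma GG_YgXg (g : G) : g = GGmul (Yg (gt g)) (Xg (gz g)).
Proof. by apply: GG_eq; apply/ffunP => i; rewrite !ffunE ?mul0r ?addr0 ?add0r. Qed.

Lemma YgD t t' : Yg (t + t') = GGmul (Yg t) (Yg t').
Proof. by apply: GG_eq; apply/ffunP => i; rewrite !ffunE ?mul0r ?addr0 ?add0r. Qed.

Lemma XgM z z' : GGmul (Xg z) (Xg z') =
  GGmul (Yg [ffun p : Yidx e => z (val p).2 * z' (val p).1]) (Xg (z + z')).
Proof. by apply: GG_eq; apply/ffunP => i; rewrite !ffunE ?mul0r ?addr0 ?add0r. Qed.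

Lemma GGmul_comm_xcommute (a b : G) :
  GGmul a b = GGmul b a <-> xcommute (gz a) (gz b).
Proof.
have commE p : gt (GGmul a b) p = gt (GGmul b a) p <->
    gz a (val p).2 * gz b (val p).1 = gz b (val p).2 * gz a (val p).1.
  by rewrite !ffunE (addrC (gt b p)); split=> [/addrI | ->].
split=> [ab_comm x y nxy | xcomm].
  have [xy | yx | /val_inj ->] := ltngtP x y; last exact: mulrC.
  - have xy_nonedge : nonedge e (x, y) by rewrite /nonedge xy.
    have := (commE (exist (nonedge e) _ xy_nonedge)).1
              (congr1 (fun g : G => gt g _) ab_comm).
    by rewrite /= mulrC => ->; rewrite mulrC.
  - have yx_nonedge : nonedge e (y, x) by rewrite /nonedge yx e_sym.
    exact: (commE (exist (nonedge e) _ yx_nonedge)).1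
             (congr1 (fun g : G => gt g _) ab_comm).
apply: GG_eq; first by rewrite !gz_mul addrC.
apply/ffunP => p; apply/commE; case: p => -[x y] /= /andP[_ nxy].
by rewrite [LHS]mulrC [RHS]mulrC (xcomm _ _ nxy).
Qed.

Lemma Yg_commutator (p : Yidx e) c :
  GGmul (Yg (delta_ffun p *~ c))
        (GGmul (Xg (delta_ffun (val p).1)) (Xg (delta_ffun (val p).2 *~ c))) =
  GGmul (Xg (delta_ffun (val p).2 *~ c)) (Xg (delta_ffun (val p).1)).
Proof.
apply: GG_eq; first by rewrite !gz_mul add0r addrC.
apply/ffunP => q; rewrite !ffunE !ffunMzE !delta_ffunE !mul0r !addr0 !add0r.
case: p q => -[i j] /= ij_nonedge [[k l] /= kl_nonedge].
have /andP[/= ij _] := ij_nonedge; have /andP[/= kl _] := kl_nonedge.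
have not_swapped : ~~ ((l == i) && (k == j)).
  apply/andP => -[/eqP li /eqP kj]; rewrite li kj in kl.
  by move: (ltn_trans ij kl); rewrite ltnn.
rewrite -(inj_eq val_inj) /= xpair_eqE !mulrzz mulrA -natrM mulnb.
rewrite (negbTE not_swapped).
by rewrite mul0r addr0 mulrAC -natrM mulnb andbC.
Qed.

Lemma xcommute_dependence (u : vec) j r (w : 'I_r -> vec) :
    u j != 0 -> (forall k, xcommute u (w k)) -> (#|cnbhd j| < r)%N ->
  exists2 m : 'I_r -> int, (exists k, m k != 0) & \sum_k w k *~ m k = 0.
Proof.
move=> uj_neq0 uw_comm.
case/(int_rows_dependent (fun k c => w k (enum_val c))) => m nz_m mw0.
exists m => //; apply/ffunP => x; rewrite sum_ffunE ffunE.
have jj : j \in cnbhd j by apply: setU11.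
have sum_cnbhd y : y \in cnbhd j -> \sum_k (w k *~ m k) y = 0.
  move=> yj; rewrite -(enum_rankK_in jj yj) -[RHS](mw0 (enum_rank_in jj y)).
  by apply: eq_bigr => k _; rewrite ffunMzE mulrzz mulrC.
have [/sum_cnbhd // | xj] := boolP (x \in cnbhd j).
have nejx : ~~ e j x by apply: contra xj => ejx; rewrite !inE ejx orbT.
(* For S := \sum_k w k *~ m k, the minors at the non-edge (j, x) give
   S x * u j = S j * u x = 0. *)
apply: (mulIf uj_neq0); rewrite mul0r -[RHS](mul0r (u x)).
rewrite -[in RHS](sum_cnbhd j jj) !mulr_suml; apply: eq_bigr => k _.
by rewrite !ffunMzE !mulrzz !(mulrAC _ (m k)) [w k x * u j]mulrC uw_comm.
Qed.

Definition vanishes_below (d : nat) (z : vec) : Prop :=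
  forall i, (deg e i < d)%N -> z i = 0.

Section InjectiveLinearMap.
Hypothesis e_irr : irreflexive e.
Variable L : {additive vec -> vec}.
Hypothesis L_inj : injective L.
Hypothesis L_xcommute :
  forall i k, k \in cnbhd i -> xcommute (L (delta_ffun i)) (L (delta_ffun k)).

Lemma lin_delta_vanishes i j : (deg e j < deg e i)%N -> L (delta_ffun i) j = 0.
Proof.
move=> lt_ji; have [// | Lij_neq0] := eqVneq (L (delta_ffun i) j) 0; exfalso.
pose w (k : 'I_#|cnbhd i|) := L (delta_ffun (enum_val k)).
have [k | | m [k0 mk0_neq0] sum_w0] := xcommute_dependence (w := w) Lij_neq0.
- by apply: L_xcommute; apply: enum_valP.
- by rewrite !card_cnbhd.
have : \sum_k delta_ffun (enum_val k) *~ m k = 0.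
  apply: L_inj; rewrite raddf0 raddf_sum -[RHS]sum_w0.
  by apply: eq_bigr => k _; rewrite raddfMz.
move/(congr1 (fun z : vec => z (enum_val k0))).
rewrite sum_ffunE (bigD1 k0) //= big1 => [|k /negbTE k_neq]; last first.
  by rewrite ffunMzE delta_ffunE (inj_eq enum_val_inj) eq_sym k_neq mul0rz.
rewrite ffunMzE delta_ffunE eqxx mulrzz mul1r addr0 ffunE => mk0_eq0.
by rewrite mk0_eq0 eqxx in mk0_neq0.
Qed.

Lemma lin_vanishes_below d z : vanishes_below d z -> vanishes_below d (L z).
Proof.
move=> z_low j lt_jd; rewrite (ffun_delta_expand z) raddf_sum sum_ffunE big1 // => i _.
rewrite raddfMz ffunMzE; have [/z_low -> | le_di] := ltnP (deg e i) d.
  exact: mulr0z.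
by rewrite lin_delta_vanishes ?mul0rz // (leq_trans lt_jd le_di).
Qed.

End InjectiveLinearMap.

Section Endomorphism.
Variable phi : G -> G.
Hypothesis phiM : forall a b, phi (GGmul a b) = GGmul (phi a) (phi b).

Definition lin_part (z : vec) : vec := gz (phi (Xg z)).

Lemma gz_phiM a b : gz (phi (GGmul a b)) = gz (phi a) + gz (phi b).
Proof. by rewrite phiM gz_mul. Qed.

Lemma gz_phi1 : gz (phi (mkGG 0 0)) = 0.
Proof.
have one_idem : GGmul (mkGG 0 0) (mkGG 0 0) = mkGG 0 0 :> G.
  by apply: GG_eq; apply/ffunP => ?; rewrite !ffunE ?addr0 ?mulr0.
apply: (addrI (gz (phi (mkGG 0 0)))).
by rewrite -gz_phiM one_idem addr0.
Qed.

Lemma gz_phi_Yg t : gz (phi (Yg t)) = 0.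
Proof.
have YgD_phi : {morph (fun t => gz (phi (Yg t))) : t t' / t + t'}.
  by move=> t1 t2 /=; rewrite YgD gz_phiM.
rewrite (ffun_delta_expand t) (big_morph _ YgD_phi gz_phi1) big1 // => p _.
apply: (addIr (gz (phi (Xg (delta_ffun (val p).1)))
                + gz (phi (Xg (delta_ffun (val p).2 *~ t p))))).
by rewrite add0r -!gz_phiM Yg_commutator !gz_phiM addrC.
Qed.

Lemma gz_phi g : gz (phi g) = lin_part (gz g).
Proof. by rewrite {1}(GG_YgXg g) gz_phiM gz_phi_Yg add0r. Qed.

Lemma lin_part_is_nmod_morphism : nmod_morphism lin_part.
Proof.
split; first exact: gz_phi1.
by move=> z z'; rewrite /lin_part -gz_phiM XgM gz_phiM gz_phi_Yg add0r.
Qed.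

Lemma lin_part_xcommute i k :
  k \in cnbhd i -> xcommute (lin_part (delta_ffun i)) (lin_part (delta_ffun k)).
Proof.
move=> /xcommute_delta /(GGmul_comm_xcommute (Xg _) (Xg _)) comm.
by apply/GGmul_comm_xcommute; rewrite -!phiM comm.
Qed.

End Endomorphism.

Lemma lin_partK (phi psi : G -> G) :
    (forall a b, psi (GGmul a b) = GGmul (psi a) (psi b)) ->
  cancel phi psi -> cancel (lin_part phi) (lin_part psi).
Proof. by move=> psiM phiK z; rewrite {2}/lin_part -(gz_phi psiM) phiK. Qed.

Section Automorphism.
Hypothesis e_irr : irreflexive e.
Variables phi psi : G -> G.
Hypothesis phiM : forall a b, phi (GGmul a b) = GGmul (phi a) (phi b).
Hypothesis psiM : forall a b, psi (GGmul a b) = GGmul (psi a) (psi b).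
Hypothesis phiK : cancel phi psi.

HB.instance Definition _ :=
  GRing.isNmodMorphism.Build vec vec (lin_part phi) (lin_part_is_nmod_morphism phiM).

Lemma aut_inH d g : inH d g -> inH d (phi g).
Proof.
rewrite /inH (gz_phi phiM); apply: lin_vanishes_below => //.
  exact: can_inj (lin_partK psiM phiK).
exact: lin_part_xcommute.
Qed.

End Automorphism.

End Graph.

Theorem theorem4p3 (n : nat) (e : rel 'I_n)
  (e_sym : symmetric e) (e_irr : irreflexive e)
  (d : nat) (hd1 : (1 <= d)%N) (hd2 : (d <= n - 1)%N)
  (phi : GG e -> GG e) (hphi : is_aut phi) :
  (forall g, inH d g -> inH d (phi g)) /\
  (forall h, inH d h -> exists g, inH d g /\ phi g = h).
Proof.
case: hphi => -[psi phiK psiK] phiM.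
have psiM a b : psi (GGmul a b) = GGmul (psi a) (psi b).
  by apply: (can_inj phiK); rewrite phiM !psiK.
split=> [g gH | h hH]; first exact: (aut_inH e_sym e_irr phiM psiM phiK gH).
exists (psi h); split; last exact: psiK.
exact: (aut_inH e_sym e_irr psiM phiM psiK hH).
Qed.
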